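(* For every real $M\ge2$, $$\frac12\log(2M+1)<\frac{M+1}{i}\mathcal{F}_M(iM)=K\Big(\frac{M}{M+1}\Big)<\frac12\Big(\frac{12}{5}+\log(2M+1)\Big),$$ where $\frac{M+1}{i}\mathcal{F}_M(iM)=(M+1)\displaystyle\int_0^M\frac{dt}{\sqrt{(M^2-t^2)((M+1)^2-t^2)}}$ and $K(k)=\displaystyle\int_0^1\frac{dx}{\sqrt{(1-x^2)(1-k^2x^2)}}$ is the complete elliptic integral of the first kind.
   Context: $\mathcal{F}_M(z)=\int_0^z\frac{d\zeta}{\sqrt{(\zeta^2-(iM)^2)(\zeta^2-(i(M+1))^2)}}$, $z$ in the closed left half-plane, with the branch of the square root positive on the positive real axis; $\mathcal{F}_M(iM)$ is the integral along the segment $[0,iM]$ of the imaginary axis. *)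

From HB Require Import structures.
From mathcomp Require Import all_boot all_order all_algebra.
From mathcomp Require Import all_classical all_reals all_analysis.
Set Implicit Arguments. Unset Strict Implicit. Unset Printing Implicit Defensive.
Import Order.TTheory GRing.Theory Num.Theory.
Import numFieldNormedType.Exports.
Local Open Scope classical_set_scope.
Local Open Scope ring_scope.

(* (1/i) * F_M(iM): along the segment [0, iM], zeta = i t, d zeta = i dt and
   the principal square root of (M^2 - t^2)((M+1)^2 - t^2) >= 0 is positive,
   so F_M(iM) = i * \int_0^M dt / sqrt((M^2-t^2)((M+1)^2-t^2)).
   The (improper, nonnegative) integral is taken as a Lebesgue integral in
   the extended reals. *)
Definition FMiM_div_i (R : realType) (M : R) : \bar R :=
  (\int[@lebesgue_measure R]_(t in `]0%R, M[%classic)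
     ((Num.sqrt ((M ^+ 2 - t ^+ 2) * ((M + 1) ^+ 2 - t ^+ 2)))^-1)%:E)%E.

Definition ellipticK (R : realType) (k : R) : \bar R :=
  (\int[@lebesgue_measure R]_(x in `]0%R, 1%R[%classic)
     ((Num.sqrt ((1 - x ^+ 2) * (1 - k ^+ 2 * x ^+ 2)))^-1)%:E)%E.

From mathcomp Require Import all_boot all_order all_algebra.
From mathcomp Require Import all_classical all_reals all_analysis.
From mathcomp Require Import measurable_realfun ring lra.
Import Order.TTheory GRing.Theory Num.Theory.
Import numFieldNormedType.Exports.
Local Open Scope classical_set_scope.
Local Open Scope ring_scope.

(* The substitution t = M x turns (M + 1)/i F_M(iM) into K(M/(M + 1)).  Write
   the integrand as 1/sqrt((M - t)(M + 1 - t) (M + t)(M + 1 + t)).  By AM-GM,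
   (M - t)(M + 1 - t) <= (M + 1/2 - t)^2 and (M + t)(M + 1 + t) <= (2M + 1)^2,
   which gives an elementary minorant whose integral is log(2M + 1)/(2M + 1).
   Conversely (M + t)(M + 1 + t) >= (M + t + 2/5)^2 as soon as M >= 2, and
   1/(sqrt((M - t)(M + 1 - t)) (M + t + 2/5)) has an explicit logarithmic
   primitive; evaluating it and bounding log 2 <= 18/25 gives the upper bound. *)

Section integral_on_intervals.
Context {R : realType}.
Local Notation mu := (@lebesgue_measure R).

(* The measure instance of a pushforward depends on a proof that the map is
   measurable, so it cannot be inferred and is invoked by name. *)
Let mulr_pushforward (k : R) : {measure set (measurableTypeR R) -> \bar R} :=
  @measure_function_pushforward__canonical__measure_function_Measure _ _ _
    (measurableTypeR R) _ mu ( *%R k : R -> measurableTypeR R)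
    (@mulrl_measurable R setT k).

Let lebesgue_measure_dilation (k : R) (k0 : 0 < k) (A : set R) :
  measurable A -> mu A = mscale (NngNum (ltW k0)) (mulr_pushforward k) A.
Proof.
move=> mA; apply: lebesgue_measure_unique => //= _ [[a b]] _ <-.
rewrite /mscale /= /pushforward /=.
have -> : [eta *%R k] @^-1` `]a, b]%classic = `]a / k, b / k]%classic.
  apply/seteqP; split => x /=; rewrite !in_itv /=.
  - by move=> /andP[h1 h2]; rewrite ltr_pdivrMr // ler_pdivlMr // [x * k]mulrC h1 h2.
  - move=> /andP[h1 h2]; rewrite -ltr_pdivrMl // -ler_pdivlMl //.
    by rewrite mulrC h1 /= mulrC.
rewrite !lebesgue_measure_itv /= !lte_fin ltr_pM2r ?invr_gt0 //.
case: ifPn => ab; last by rewrite mule0.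
by rewrite -EFinM -EFinD mulrBr !mulrA !(mulrC k) -!mulrA divff ?gt_eqF // !mulr1.
Qed.

Lemma ge0_integral_itv0_dilation (M : R) (f : R -> R) : 0 < M ->
  (forall x, 0 <= f x) -> measurable_fun `]0, M[ f ->
  (\int[mu]_(t in `]0%R, M[) (f t)%:E =
   M%:E * \int[mu]_(x in `]0%R, 1%R[) (f (M * x))%:E)%E.
Proof.
move=> M0 f0 mf.
rewrite (@eq_measure_integral _ _ _ _ (mscale (NngNum (ltW M0)) (mulr_pushforward M)));
  last by move=> A mA _; exact: lebesgue_measure_dilation.
rewrite ge0_integral_mscale //=; last 2 first.
- exact/measurable_EFinP.
- by move=> x _; rewrite lee_fin.
congr (_ * _)%E.
rewrite ge0_integral_pushforward //=; last 2 first.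
- exact/measurable_EFinP.
- by move=> x _; rewrite lee_fin.
suff -> : [eta *%R M] @^-1` `]0, M[%classic = `]0, 1[%classic by [].
apply/seteqP; split => x /=; rewrite !in_itv /= => /andP[x0 x1].
- by rewrite -(pmulr_rgt0 _ M0) x0 /= -(ltr_pM2l M0) mulr1.
- by rewrite pmulr_rgt0 // x0 /= -[X in _ < X]mulr1 ltr_pM2l.
Qed.

Lemma measurable_fun_inv_sqrt (D : set R) (p : R -> R) : open D -> continuous p ->
  (forall x, D x -> 0 < p x) -> measurable_fun D (fun x => (Num.sqrt (p x))^-1).
Proof.
move=> oD cp p0; apply: open_continuous_measurable_fun => // x /[!inE] Dx.
apply: (@continuousV R R (fun y => Num.sqrt (p y)) x); first by rewrite gt_eqF // sqrtr_gt0 p0.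
exact: continuous_comp (cp x) (@sqrt_continuous R _).
Qed.

Lemma measurable_fun_itv_oo_continuous (a b : R) (f : R -> R) :
  {in `]a, b[, forall t : R, {for t, continuous f}} -> measurable_fun `]a, b[ f.
Proof.
move=> fc; apply: open_continuous_measurable_fun; first exact: interval_open.
by move=> x /[!inE]; exact: fc.
Qed.

Lemma integral_itv_oo_FTC (a b : R) (f F : R -> R) : a < b ->
  {in `[a, b], forall t : R, {for t, continuous f}} ->
  {in `[a, b], forall t : R, is_derive t 1 F (f t)} ->
  (\int[mu]_(t in `]a, b[) (f t)%:E = (F b - F a)%:E)%E.
Proof.
move=> ab fc dF.
have inab t : a < t < b -> t \in `[a, b] by rewrite in_itv /= => /andP[/ltW -> /ltW].
have continuous_F t : t \in `[a, b] -> {for t, continuous F}.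
  by move=> /dF [+ _] => /derivable1_diffP/differentiable_continuous.
have mf : measurable_fun `]a, b[ f.
  by apply: measurable_fun_itv_oo_continuous => x /[!in_itv] /= /inab /fc.
rewrite -(@integral_itv_bndoo _ a b _ true false); last exact/measurable_EFinP.
rewrite EFinB (@continuous_FTC2 _ f F) //.
- by apply: continuous_in_subspaceT => x /[!inE]; exact: fc.
- split.
  + by move=> x /[!in_itv] /= /inab /dF [].
  + by apply: cvg_at_right_filter; apply: continuous_F; rewrite in_itv /= lexx ltW.
  + by apply: cvg_at_left_filter; apply: continuous_F; rewrite in_itv /= lexx ltW.
- by move=> x /[!in_itv] /= /inab xab; rewrite derive1E; apply: derive_val; exact: dF.
Qed.

(* Exhaust ]a, b[ by the intervals ]a, b - (b - a)/(n + 2)[ and pass to the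
   limit by monotone convergence. *)
Lemma ge0_integral_itv_oo_le (a b B : R) (f F : R -> R) : a < b ->
  {in `[a, b[, forall t, 0 <= f t} ->
  {in `[a, b[, forall t : R, {for t, continuous f}} ->
  {in `[a, b[, forall t : R, is_derive t 1 F (f t)} ->
  (forall c, a < c < b -> F c - F a <= B) ->
  (\int[mu]_(t in `]a, b[) (f t)%:E <= B%:E)%E.
Proof.
move=> ab f0 fc dF FB.
have ba : 0 < b - a by rewrite subr_gt0.
pose d n : R := (b - a) / n.+2%:R.
have d0 n : 0 < d n by rewrite divr_gt0 // ltr0n.
have dba n : d n < b - a by rewrite ltr_pdivrMr ?ltr0n // ltr_pMr // ltr1n.
pose c n : R := b - d n.
have ac n : a < c n by have := dba n; rewrite /c; lra.
have cb n : c n < b by have := d0 n; rewrite /c; lra.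
pose I n := `]a, c n[%classic : set R.
have I_nd : nondecreasing_seq I.
  apply/nondecreasing_seqP => n; apply/subsetPset => x; rewrite /I /= !in_itv /=.
  move=> /andP[-> xc] /=; apply: (lt_le_trans xc); rewrite /c lerD2l lerN2.
  by rewrite ler_pM2l // lef_pV2 ?posrE ?ltr0n // ler_nat.
have UI : \bigcup_n I n = `]a, b[%classic.
  apply/seteqP; split => x /=.
  - by move=> [n _]; rewrite /I /= !in_itv /= => /andP[-> /lt_trans ->].
  - rewrite in_itv /= => /andP[ax xb].
    have bx : 0 < b - x by rewrite subr_gt0.
    have := archimedean.Num.Theory.real_truncnS_gt (num_real ((b - a) / (b - x))).
    set n := Num.truncn _ => hn.
    exists n => //; rewrite /I /= in_itv /= ax /= /c ltrBrDl -ltrBrDr.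
    rewrite /d ltr_pdivrMr ?ltr0n // mulrC -ltr_pdivrMr //.
    by apply: (lt_le_trans hn); rewrite ler_nat.
have inab t : a < t < b -> t \in `[a, b[ by rewrite in_itv /= => /andP[/ltW -> ->].
have mf : measurable_fun `]a, b[ f.
  by apply: measurable_fun_itv_oo_continuous => x /[!in_itv] /= /inab /fc.
have mfI n : measurable_fun (I n) (EFin \o f).
  by apply/measurable_EFinP; apply: measurable_funS mf => //; rewrite -UI; exact: bigcup_sup.
have f0I n x : I n x -> (0 <= (EFin \o f) x)%E.
  rewrite /I /= in_itv /= => /andP[ax xc]; rewrite lee_fin f0 //.
  by apply: inab; rewrite ax (lt_trans xc).
have := ge0_nondecreasing_set_cvg_integral (mu := mu) I_nd
  (fun n => measurable_itv _) mfI f0I.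
rewrite UI => cvgI.
rewrite -(cvg_lim _ cvgI) //; apply: lime_le; first by apply/cvg_ex; eexists; exact: cvgI.
apply: nearW => n /=; rewrite (@integral_itv_oo_FTC _ _ f F (ac n)).
- by rewrite lee_fin FB // ac cb.
- move=> t /[!in_itv] /= /andP[ta tc]; apply: fc.
  by rewrite in_itv /= ta (le_lt_trans tc).
- move=> t /[!in_itv] /= /andP[ta tc]; apply: dF.
  by rewrite in_itv /= ta (le_lt_trans tc).
Qed.

End integral_on_intervals.

Section derivatives.
Context {R : realType}.

Lemma is_derive_affine (a b x : R) : is_derive x 1 (fun t => a + b * t) b.
Proof.
have := is_deriveD (is_derive_cst a x 1) (is_deriveZ b (@is_derive_id _ R^o x 1)).
by rewrite add0r scaler1.
Qed.

Lemma is_derive_sqrt_affine (a b x : R) : 0 < a + b * x ->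
  is_derive x 1 (fun t => Num.sqrt (a + b * t)) (b / (2 * Num.sqrt (a + b * x))).
Proof.
move=> h; rewrite mulrC.
exact: (@is_derive1_comp R Num.sqrt (fun t => a + b * t) x _ _
  (is_derive1_sqrt h) (is_derive_affine a b x)).
Qed.

Lemma is_derive_ln_comp (f : R -> R) (x df : R) : is_derive x 1 f df -> 0 < f x ->
  is_derive x 1 (fun t => ln (f t)) (df / f x).
Proof.
move=> d h; rewrite mulrC.
exact: (@is_derive1_comp R (@ln R) f x _ _ (is_derive1_ln h) d).
Qed.

Lemma is_derive1D (f g : R -> R) (x df dg : R) :
  is_derive x 1 f df -> is_derive x 1 g dg ->
  is_derive x 1 (fun t => f t + g t) (df + dg).
Proof. exact: (@is_deriveD _ R^o R^o f g). Qed.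

Lemma is_derive1B (f g : R -> R) (x df dg : R) :
  is_derive x 1 f df -> is_derive x 1 g dg ->
  is_derive x 1 (fun t => f t - g t) (df - dg).
Proof. exact: (@is_deriveB _ R^o R^o f g). Qed.

Lemma is_derive1Z (f : R -> R) (k x df : R) : is_derive x 1 f df ->
  is_derive x 1 (fun t => k * f t) (k * df).
Proof. exact: (@is_deriveZ _ R^o R^o f k). Qed.

Lemma continuous_affine (a b x : R) : {for x, continuous (fun y => a + b * y)}.
Proof. by have [/derivable1_diffP/differentiable_continuous] := is_derive_affine a b x. Qed.

End derivatives.

Arguments is_derive_sqrt_affine {R a b x}.
Arguments is_derive_ln_comp {R f x df}.
Arguments is_derive1D {R f g x df dg}.
Arguments is_derive1B {R f g x df dg}.
Arguments is_derive1Z {R f} k {x df}.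

(* (409/400)^32 >= 2 by repeated squaring, and ln (409/400) <= 9/400. *)
Lemma ln2_le {R : realType} : ln (2 : R) <= 18 / 25.
Proof.
pose z : R := 409 / 400.
have z0 : 0 < z by rewrite /z; lra.
have sq_le (a x : R) : 0 <= a -> a <= x -> a * a <= x ^+ 2.
  by move=> a0 ax; rewrite expr2; apply: ler_pM.
have h1 : 942 / 901 <= z ^+ 2 by rewrite /z expr2; lra.
have h2 : 458 / 419 <= z ^+ 4.
  rewrite (_ : z ^+ 4 = (z ^+ 2) ^+ 2); last by rewrite -exprM.
  by apply: le_trans _ (sq_le _ _ _ h1); lra.
have h3 : 1061 / 888 <= z ^+ 8.
  rewrite (_ : z ^+ 8 = (z ^+ 4) ^+ 2); last by rewrite -exprM.
  by apply: le_trans _ (sq_le _ _ _ h2); lra.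
have h4 : 1252 / 877 <= z ^+ 16.
  rewrite (_ : z ^+ 16 = (z ^+ 8) ^+ 2); last by rewrite -exprM.
  by apply: le_trans _ (sq_le _ _ _ h3); lra.
have h5 : 2 <= z ^+ 32.
  rewrite (_ : z ^+ 32 = (z ^+ 16) ^+ 2); last by rewrite -exprM.
  by apply: le_trans _ (sq_le _ _ _ h4); lra.
have lnz : ln z <= 9 / 400.
  by rewrite (_ : z = 1 + 9 / 400); [apply: le_ln1Dx; lra | rewrite /z; lra].
have : ln 2 <= ln (z ^+ 32) by rewrite ler_ln ?posrE ?exprn_gt0 //; lra.
by rewrite lnXn // -mulr_natr; lra.
Qed.

Section FMiM.
Context {R : realType} (M : R).
Local Notation mu := (@lebesgue_measure R).

Definition FMiM_integrand (t : R) : R :=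
  (Num.sqrt ((M ^+ 2 - t ^+ 2) * ((M + 1) ^+ 2 - t ^+ 2)))^-1.

Lemma FMiM_div_iE :
  FMiM_div_i M = (\int[mu]_(t in `]0%R, M[) (FMiM_integrand t)%:E)%E.
Proof. by []. Qed.

Lemma FMiM_integrand_ge0 (t : R) : 0 <= FMiM_integrand t.
Proof. by rewrite invr_ge0 sqrtr_ge0. Qed.

Lemma FMiM_factor (t : R) : (M ^+ 2 - t ^+ 2) * ((M + 1) ^+ 2 - t ^+ 2) =
  ((M - t) * (M + 1 - t)) * ((M + t) * (M + 1 + t)).
Proof. by ring. Qed.

Lemma measurable_FMiM_integrand : 0 < M -> measurable_fun `]0, M[ FMiM_integrand.
Proof.
move=> M0; apply: measurable_fun_inv_sqrt; first exact: interval_open.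
  move=> x; apply: (@continuousM R R (fun t => M ^+ 2 - t ^+ 2)
    (fun t => (M + 1) ^+ 2 - t ^+ 2) x);
    by apply: (@continuousB R R^o R); [exact: cst_continuous | exact: exprn_continuous].
move=> x /=; rewrite in_itv /= => /andP[x0 xM].
by rewrite FMiM_factor; apply: mulr_gt0; apply: mulr_gt0; lra.
Qed.

Lemma FMiM_div_i_dilation : 0 < M ->
  ((M + 1)%:E * FMiM_div_i M = ellipticK (M / (M + 1)))%E.
Proof.
move=> M0; have M1 : 0 < M + 1 by lra.
set k := M / (M + 1).
have k0 : 0 <= k by rewrite divr_ge0 //; lra.
have k1 : k < 1 by rewrite ltr_pdivrMr //; lra.
pose g (x : R) := (Num.sqrt ((1 - x ^+ 2) * (1 - k ^+ 2 * x ^+ 2)))^-1.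
have scaled x : FMiM_integrand (M * x) = (M * (M + 1))^-1 * g x.
  rewrite /FMiM_integrand /g -invfM; congr GRing.inv.
  have -> : (M ^+ 2 - (M * x) ^+ 2) * ((M + 1) ^+ 2 - (M * x) ^+ 2) =
      (M * (M + 1)) ^+ 2 * ((1 - x ^+ 2) * (1 - k ^+ 2 * x ^+ 2)).
    by rewrite /k; field; rewrite gt_eqF.
  by rewrite sqrtrM ?sqr_ge0 // sqrtr_sqr ger0_norm // mulr_ge0 // ltW.
have mg : measurable_fun (`]0, 1[%classic : set R) g.
  apply: measurable_fun_inv_sqrt; first exact: interval_open.
    move=> y; apply: (@continuousM R R (fun t => 1 - t ^+ 2)
      (fun t => 1 - k ^+ 2 * t ^+ 2) y);
      apply: (@continuousB R R^o R); try exact: cst_continuous; first exact: exprn_continuous.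
    apply: (@continuousM R R (fun=> k ^+ 2) (fun t => t ^+ 2) y);
      [exact: cst_continuous | exact: exprn_continuous].
  move=> x /=; rewrite in_itv /= => /andP[x0 x1].
  have x21 : x ^+ 2 < 1 by rewrite expr2; nra.
  have kx : k ^+ 2 * x ^+ 2 < 1.
    have kx1 : k * x < 1 by nra.
    by rewrite -exprMn expr2; nra.
  by apply: mulr_gt0; rewrite subr_gt0.
rewrite FMiM_div_iE (ge0_integral_itv0_dilation _ _ M0 FMiM_integrand_ge0);
  last exact: measurable_FMiM_integrand M0.
under eq_integral do rewrite scaled EFinM.
rewrite ge0_integralZl_EFin //; last 3 first.
- by move=> x _; rewrite lee_fin invr_ge0 sqrtr_ge0.
- exact/measurable_EFinP.
- by rewrite invr_ge0 mulr_ge0 // ltW.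
rewrite !muleA -!EFinM.
have -> : (M + 1) * M * (M * (M + 1))^-1 = 1 by field; rewrite !gt_eqF.
by rewrite mul1e.
Qed.

Definition FMiM_minorant (t : R) : R := ((2 * M + 1 - 2 * t) * (2 * M + 1) / 2)^-1.

Definition FMiM_minorant_primitive (t : R) : R :=
  - (2 * M + 1)^-1 * ln ((2 * M + 1) + (-2) * t).

(* AM-GM on each pair of factors:
   (M - t)(M + 1 - t) <= (M + 1/2 - t)^2 and (M + t)(M + 1 + t) <= (2M + 1)^2. *)
Lemma FMiM_minorant_le (t : R) : 0 < t < M -> FMiM_minorant t <= FMiM_integrand t.
Proof.
move=> /andP[t0 tM].
set a := (M - t) * (M + 1 - t); set b := (M + t) * (M + 1 + t).
have a0 : 0 < a by rewrite /a; apply: mulr_gt0; lra.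
have b0 : 0 < b by rewrite /b; apply: mulr_gt0; lra.
set W := (2 * M + 1 - 2 * t) * (2 * M + 1) / 2.
have W0 : 0 < W by rewrite /W; apply: divr_gt0; [apply: mulr_gt0|]; lra.
have aW : a <= ((2 * M + 1 - 2 * t) / 2) ^+ 2 by rewrite /a; nra.
have bW : b <= (2 * M + 1) ^+ 2 by rewrite /b; nra.
have abW : a * b <= W ^+ 2.
  rewrite (_ : W ^+ 2 = ((2 * M + 1 - 2 * t) / 2) ^+ 2 * (2 * M + 1) ^+ 2);
    last by rewrite /W; field.
  by apply: ler_pM => //; apply: ltW.
rewrite /FMiM_minorant /FMiM_integrand FMiM_factor -/a -/b -/W.
rewrite lef_pV2 ?posrE ?sqrtr_gt0 ?(mulr_gt0 a0 b0) //.
by apply: (le_trans (ler_wsqrtr abW)); rewrite sqrtr_sqr ger0_norm // ltW.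
Qed.

Lemma continuous_FMiM_minorant (t : R) :
  t \in `[0, M] -> {for t, continuous FMiM_minorant}.
Proof.
rewrite in_itv /= => /andP[t0 tM].
have -> : FMiM_minorant = fun y => ((2 * M + 1) ^+ 2 / 2 + (- (2 * M + 1)) * y)^-1.
  by apply/funext => y; rewrite /FMiM_minorant; congr GRing.inv; field.
apply: (@continuousV R R (fun y => (2 * M + 1) ^+ 2 / 2 + (- (2 * M + 1)) * y) t);
  last exact: continuous_affine.
by rewrite gt_eqF //; nra.
Qed.

Lemma is_derive_FMiM_minorant_primitive (t : R) : t \in `[0, M] ->
  is_derive t 1 FMiM_minorant_primitive (FMiM_minorant t).
Proof.
rewrite in_itv /= => /andP[t0 tM].
have p : 0 < (2 * M + 1) + (-2) * t by lra.
have := is_derive1Z (- (2 * M + 1)^-1) (is_derive_ln_comp (is_derive_affine _ _ t) p).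
move/is_derive_eq; apply.
by rewrite /FMiM_minorant; field; rewrite !gt_eqF //; lra.
Qed.

Lemma FMiM_div_i_ge : 0 < M -> ((ln (2 * M + 1) / (2 * M + 1))%:E <= FMiM_div_i M)%E.
Proof.
move=> M0.
have -> : ln (2 * M + 1) / (2 * M + 1) =
    FMiM_minorant_primitive M - FMiM_minorant_primitive 0.
  rewrite /FMiM_minorant_primitive (_ : 2 * M + 1 + -2 * M = 1); last by ring.
  by rewrite ln1 !mulr0 addr0; field; lra.
rewrite -(@integral_itv_oo_FTC _ 0 M _ _ M0 continuous_FMiM_minorant
  is_derive_FMiM_minorant_primitive) FMiM_div_iE.
apply: ge0_le_integral => //.
- move=> x; rewrite /= in_itv /= => /andP[x0 xM]; rewrite lee_fin invr_ge0.
  by apply: divr_ge0; [apply: mulr_ge0|]; lra.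
- apply/measurable_EFinP; apply: measurable_fun_itv_oo_continuous => x.
  by rewrite in_itv /= => /andP[x0 xM]; apply: continuous_FMiM_minorant; rewrite in_itv /= !ltW.
- by apply/measurable_EFinP; exact: measurable_FMiM_integrand.
- by move=> x; rewrite /= in_itv /= => xM; rewrite lee_fin FMiM_minorant_le.
Qed.

Lemma minorant_integral_gt : 0 < M ->
  2^-1 * ln (2 * M + 1) < (M + 1) * (ln (2 * M + 1) / (2 * M + 1)).
Proof.
move=> M0; have y0 : 0 < ln (2 * M + 1) by apply: ln_gt0; lra.
by rewrite mulrCA mulrC ltr_pM2l // ltr_pdivlMr; lra.
Qed.

Definition FMiM_majorant (t : R) : R :=
  (Num.sqrt ((M - t) * (M + 1 - t)) * (M + t + 2 / 5))^-1.

(* (M + t)(M + 1 + t) - (M + t + 2/5)^2 = (M + t)/5 - 4/25, which is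
   nonnegative as soon as M + t >= 4/5. *)
Lemma FMiM_integrand_le_majorant (t : R) : 2 <= M -> 0 < t < M ->
  FMiM_integrand t <= FMiM_majorant t.
Proof.
move=> M2 /andP[t0 tM].
set a := (M - t) * (M + 1 - t); set b := (M + t) * (M + 1 + t).
have a0 : 0 < a by rewrite /a; apply: mulr_gt0; lra.
have b0 : 0 < b by rewrite /b; apply: mulr_gt0; lra.
have l0 : 0 < M + t + 2 / 5 by lra.
have hb : (M + t + 2 / 5) ^+ 2 <= b by rewrite /b expr2; nra.
rewrite /FMiM_majorant /FMiM_integrand FMiM_factor -/a -/b; clearbody a b.
have sa : 0 < Num.sqrt a by rewrite sqrtr_gt0.
rewrite lef_pV2 ?posrE ?sqrtr_gt0 ?(mulr_gt0 a0 b0) ?(mulr_gt0 sa l0) //.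
rewrite sqrtrM ?(ltW a0) // ler_pM2l //.
by rewrite -[X in X <= _]ger0_norm ?(ltW l0) // -sqrtr_sqr ler_wsqrtr.
Qed.

Lemma continuous_FMiM_majorant (t : R) :
  t \in `[0, M[ -> {for t, continuous FMiM_majorant}.
Proof.
rewrite in_itv /= => /andP[t0 tM].
have p0 : 0 < (M - t) * (M + 1 - t) by apply: mulr_gt0; lra.
have affine a b (f : R -> R) : f = (fun y => a + b * y) -> {for t, continuous f}.
  by move=> ->; exact: continuous_affine.
apply: (@continuousV R R
  (fun y => Num.sqrt ((M - y) * (M + 1 - y)) * (M + y + 2 / 5)) t).
  by rewrite mulf_neq0 // gt_eqF // ?sqrtr_gt0 //; lra.
apply: (@continuousM R R (fun y => Num.sqrt ((M - y) * (M + 1 - y)))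
  (fun y => M + y + 2 / 5) t).
  apply: continuous_comp; last exact: sqrt_continuous.
  apply: (@continuousM R R (fun y => M - y) (fun y => M + 1 - y) t).
    by apply: (affine M (-1)); apply/funext => y; ring.
  by apply: (affine (M + 1) (-1)); apply/funext => y; ring.
by apply: (affine (M + 2 / 5) 1); apply/funext => y; ring.
Qed.

Definition majorant_c : R := 2 * M + 2 / 5.

Definition majorant_s : R := Num.sqrt (majorant_c * (majorant_c + 1)).

(* The radicands are c (M + 1 - t) and (c + 1)(M - t), with c = majorant_c
   the value of M + t + 2/5 at t = M, written in the affine form expected by
   is_derive_sqrt_affine. *)
Definition FMiM_majorant_primitive (t : R) : R :=
  - majorant_s^-1 *
  (2 * ln (Num.sqrt (majorant_c * (M + 1) + (- majorant_c) * t) +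
           Num.sqrt ((majorant_c + 1) * M + (- (majorant_c + 1)) * t))
   - ln ((M + 2 / 5) + 1 * t)).

Lemma is_derive_FMiM_majorant_primitive (t : R) : 0 < M -> t \in `[0, M[ ->
  is_derive t 1 FMiM_majorant_primitive (FMiM_majorant t).
Proof.
rewrite in_itv /= => M0 /andP[t0 tM].
set c := majorant_c; set s := majorant_s.
have c0 : 0 < c by rewrite /c /majorant_c; lra.
have pA : 0 < c * (M + 1) + (- c) * t by nra.
have pB : 0 < (c + 1) * M + (- (c + 1)) * t by nra.
have pT : 0 < (M + 2 / 5) + 1 * t by lra.
set A := Num.sqrt (c * (M + 1) + (- c) * t).
set B := Num.sqrt ((c + 1) * M + (- (c + 1)) * t).
have A0 : 0 < A by rewrite sqrtr_gt0.
have B0 : 0 < B by rewrite sqrtr_gt0.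
have s0 : 0 < s by rewrite /s /majorant_s -/c sqrtr_gt0; nra.
have A2 : A ^+ 2 = c * (M + 1) + (- c) * t by rewrite sqr_sqrtr // ltW.
have B2 : B ^+ 2 = (c + 1) * M + (- (c + 1)) * t by rewrite sqr_sqrtr // ltW.
have s2 : s ^+ 2 = c * (c + 1) by rewrite /s /majorant_s -/c sqr_sqrtr //; nra.
have dS := is_derive1D (is_derive_sqrt_affine pA) (is_derive_sqrt_affine pB).
have := is_derive1Z (- s^-1) (is_derive1B
  (is_derive1Z 2 (is_derive_ln_comp dS (addr_gt0 A0 B0)))
  (is_derive_ln_comp (is_derive_affine _ _ t) pT)).
move/is_derive_eq; apply; rewrite /FMiM_majorant -/A -/B.
have sAB : A * B = s * Num.sqrt ((M - t) * (M + 1 - t)).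
  rewrite /A /B -sqrtrM ?ltW // /s /majorant_s -/c -sqrtrM; last by nra.
  by congr Num.sqrt; ring.
have -> : Num.sqrt ((M - t) * (M + 1 - t)) = A * B / s.
  by rewrite sAB; field; rewrite gt_eqF.
set T := M + 2 / 5 + 1 * t.
have -> : M + t + 2 / 5 = T by rewrite /T; ring.
(* The numerator collapses to s^2 (A + B) after substituting A^2, B^2, s^2. *)
set E := (c * B + (c + 1) * A) * T + A * B * (A + B).
have key : E = s ^+ 2 * (A + B).
  rewrite /E s2.
  have -> : (c * B + (c + 1) * A) * T + A * B * (A + B) =
    (c * B + (c + 1) * A) * T + A ^+ 2 * B + A * B ^+ 2 by ring.
  by rewrite A2 B2 /T /c /majorant_c; ring.
have -> : - s^-1 * (2 * ((- c / (2 * A) + - (c + 1) / (2 * B)) / (A + B)) - 1 / T)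
    = s^-1 * E / (A * B * T * (A + B)).
  rewrite /E; field.
  by rewrite (gt_eqF (addr_gt0 A0 B0)) (gt_eqF A0) (gt_eqF B0) (gt_eqF s0) gt_eqF.
rewrite key; field.
by rewrite (gt_eqF (addr_gt0 A0 B0)) (gt_eqF A0) (gt_eqF B0) (gt_eqF s0) gt_eqF.
Qed.

Definition majorant_bound : R :=
  (ln (2 * (majorant_c * (M + 1) + (majorant_c + 1) * M)) - ln (M + 2 / 5))
  / majorant_s.

(* Writing A and B for the two square roots: at t = 0 use (A + B)^2 <= 2 (A^2 + B^2),
   at t = b use A + B >= sqrt c and M + 2/5 + b <= c. *)
Lemma FMiM_majorant_primitive_sub_le (b : R) : 2 <= M -> 0 < b < M ->
  FMiM_majorant_primitive b - FMiM_majorant_primitive 0 <= majorant_bound.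
Proof.
move=> M2 /andP[b0 bM].
set c := majorant_c; set s := majorant_s.
have c0 : 0 < c by rewrite /c /majorant_c; lra.
have s0 : 0 < s by rewrite /s /majorant_s -/c sqrtr_gt0; nra.
set A0 := Num.sqrt (c * (M + 1) + (- c) * 0).
set B0 := Num.sqrt ((c + 1) * M + (- (c + 1)) * 0).
set Ab := Num.sqrt (c * (M + 1) + (- c) * b).
set Bb := Num.sqrt ((c + 1) * M + (- (c + 1)) * b).
have pA0 : 0 < c * (M + 1) + (- c) * 0 by nra.
have pB0 : 0 < (c + 1) * M + (- (c + 1)) * 0 by nra.
have pAb : c <= c * (M + 1) + (- c) * b by nra.
have A00 : 0 < A0 by rewrite sqrtr_gt0.
have B00 : 0 <= B0 by rewrite sqrtr_ge0.
have Bb0 : 0 <= Bb by rewrite sqrtr_ge0.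
have sc0 : 0 < Num.sqrt c by rewrite sqrtr_gt0.
have Abc : Num.sqrt c <= Ab by rewrite ler_wsqrtr.
have S0 : 0 < A0 + B0 by lra.
have Sb : 0 < Ab + Bb by lra.
have hS0 : 2 * ln (A0 + B0) <= ln (2 * (c * (M + 1) + (c + 1) * M)).
  rewrite mulr_natl -lnXn // ler_ln ?posrE ?exprn_gt0 //; last by nra.
  have eA : A0 ^+ 2 = c * (M + 1) + (- c) * 0 by rewrite sqr_sqrtr // ltW.
  have eB : B0 ^+ 2 = (c + 1) * M + (- (c + 1)) * 0 by rewrite sqr_sqrtr // ltW.
  have : (A0 + B0) ^+ 2 <= 2 * (A0 ^+ 2 + B0 ^+ 2).
    by have := sqr_ge0 (A0 - B0); rewrite !expr2; lra.
  by move/le_trans; apply; rewrite eA eB; lra.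
have hSb : ln c <= 2 * ln (Ab + Bb).
  rewrite mulr_natl -lnXn // -{1}(sqr_sqrtr (ltW c0)) ler_ln ?posrE ?exprn_gt0 //.
  by rewrite ler_pXn2r // ?nnegrE; lra.
have hTb : ln ((M + 2 / 5) + 1 * b) <= ln c by rewrite ler_ln ?posrE /c /majorant_c; lra.
rewrite /FMiM_majorant_primitive /majorant_bound -/c -/s -/A0 -/B0 -/Ab -/Bb.
rewrite mulr0 addr0 -mulrBr mulNr -mulrN opprB mulrC ler_pM2r ?invr_gt0 //.
lra.
Qed.

Lemma FMiM_div_i_le : 2 <= M -> (FMiM_div_i M <= majorant_bound%:E)%E.
Proof.
move=> M2; have M0 : 0 < M by lra.
have lo t : t \in `]0, M[ -> t \in `[0, M[.
  by rewrite !in_itv /= => /andP[/ltW -> ->].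
rewrite FMiM_div_iE; apply: (@le_trans _ _
  (\int[mu]_(t in `]0%R, M[) (FMiM_majorant t)%:E)%E).
  apply: ge0_le_integral => //.
  - by move=> x _; rewrite lee_fin FMiM_integrand_ge0.
  - by apply/measurable_EFinP; exact: measurable_FMiM_integrand.
  - apply/measurable_EFinP; apply: measurable_fun_itv_oo_continuous => x.
    by move/lo; exact: continuous_FMiM_majorant.
  - by move=> x; rewrite /= in_itv /= => xM; rewrite lee_fin FMiM_integrand_le_majorant.
apply: (@ge0_integral_itv_oo_le _ 0 M _ _ FMiM_majorant_primitive M0).
- rewrite /FMiM_majorant => t; rewrite in_itv /= => /andP[t0 tM].
  by rewrite invr_ge0 mulr_ge0 ?sqrtr_ge0 //; lra.
- exact: continuous_FMiM_majorant.
- by move=> t; exact: is_derive_FMiM_majorant_primitive.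
- by move=> b; exact: FMiM_majorant_primitive_sub_le.
Qed.

Lemma majorant_s_ge : 2 <= M -> M * (M + 1) <= majorant_s * (M / 2 + 7 / 25).
Proof.
move=> M2.
have c0 : 0 <= majorant_c * (majorant_c + 1) by rewrite /majorant_c; nra.
rewrite -(@ler_pXn2r _ 2) // ?nnegrE; last 2 first.
- nra.
- by rewrite mulr_ge0 ?sqrtr_ge0 //; lra.
by rewrite /majorant_s [X in _ <= X]exprMn sqr_sqrtr // /majorant_c; nra.
Qed.

(* 2 (c (M + 1) + (c + 1) M) <= 4 (403/400) (2M + 1)(M + 2/5) for every M. *)
Lemma majorant_bound_le : 2 <= M -> (M + 1) * majorant_bound <=
  (M + 1) / majorant_s * (ln (4 * (403 / 400)) + ln (2 * M + 1)).
Proof.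
move=> M2.
have s0 : 0 < majorant_s by rewrite sqrtr_gt0 /majorant_c; nra.
set k : R := 4 * (403 / 400).
have k0 : 0 < k by rewrite /k; lra.
have b0 : 0 < 2 * M + 1 by lra.
have c0 : 0 < M + 2 / 5 by lra.
have kb : 0 < k * (2 * M + 1) by exact: mulr_gt0.
have kbc : 0 < k * (2 * M + 1) * (M + 2 / 5) by exact: mulr_gt0.
have cX : 0 < 2 * (majorant_c * (M + 1) + (majorant_c + 1) * M).
  by rewrite /majorant_c; nra.
rewrite /majorant_bound mulrCA mulrC ler_pM2l; last by apply: divr_gt0; lra.
rewrite lerBlDr -(@lnM _ k) ?posrE // -lnM ?posrE // ler_ln ?posrE //.
by have := sqr_ge0 (M - 3); rewrite /k /majorant_c expr2; nra.
Qed.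

(* Combine ln (2M + 1) <= 2 ln 2 + 1/4 + (2M - 4)/5 with ln 2 <= 18/25. *)
Lemma majorant_log_estimate : 2 <= M ->
  (M + 1) / majorant_s * (ln (4 * (403 / 400)) + ln (2 * M + 1)) <
  6 / 5 + 2^-1 * ln (2 * M + 1).
Proof.
move=> M2.
have l2u := @ln2_le R.
have l20 : 0 <= ln (2 : R) by apply: ln_ge0; lra.
have e4 : ln (4 : R) = 2 * ln 2.
  by rewrite (_ : (4 : R) = 2 * 2) ?lnM ?posrE //; lra.
have lku : ln (4 * (403 / 400) : R) <= 2 * ln 2 + 3 / 400.
  rewrite lnM ?posrE; try lra.
  rewrite e4 lerD2l (_ : (403 / 400 : R) = 1 + 3 / 400); last by lra.
  by apply: le_ln1Dx; lra.
have lk0 : 0 <= ln (4 * (403 / 400) : R) by apply: ln_ge0; lra.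
have y0 : 0 <= ln (2 * M + 1) by apply: ln_ge0; lra.
have yu : ln (2 * M + 1) <= 2 * ln 2 + 1 / 4 + (2 * M - 4) / 5.
  have -> : 2 * M + 1 = (4 * (1 + 1 / 4)) * (1 + (2 * M - 4) / 5) by field.
  rewrite !lnM ?posrE; try lra.
  by rewrite e4 -!addrA lerD2l; apply: lerD; apply: le_ln1Dx; lra.
have s0 : 0 < majorant_s by rewrite sqrtr_gt0 /majorant_c; nra.
set P := (M + 1) / majorant_s.
have P0 : 0 <= P by rewrite /P divr_ge0 //; lra.
have MP : M * P <= M / 2 + 7 / 25.
  by rewrite /P mulrA ler_pdivrMr //; have := majorant_s_ge M2; lra.
set lk := ln (4 * (403 / 400) : R) in lku lk0 *.
set y := ln (2 * M + 1) in y0 yu *.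
set l2 := ln (2 : R) in l2u l20 e4 lku yu.
rewrite -(ltr_pM2l (_ : 0 < M)); last by lra.
apply: (le_lt_trans (_ : _ <= (M / 2 + 7 / 25) * (lk + y))).
  by rewrite mulrA ler_wpM2r //; lra.
have h1 : M * lk <= M * (2 * l2 + 3 / 400) by rewrite ler_wpM2l //; lra.
have h2 : M * l2 <= M * (18 / 25) by rewrite ler_wpM2l //; lra.
nra.
Qed.

Lemma majorant_bound_lt : 2 <= M ->
  (M + 1) * majorant_bound < 2^-1 * (12 / 5 + ln (2 * M + 1)).
Proof.
move=> M2; apply: le_lt_trans (majorant_bound_le M2) _.
by have := majorant_log_estimate M2; lra.
Qed.

End FMiM.

Theorem lemma14 (R : realType) (M : R) (hM : 2 <= M) :
  ((2^-1 * ln (2 * M + 1))%:E < (M + 1)%:E * FMiM_div_i M)%E /\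
  ((M + 1)%:E * FMiM_div_i M = ellipticK (M / (M + 1)))%E /\
  (ellipticK (M / (M + 1)) < (2^-1 * (12 / 5 + ln (2 * M + 1)))%:E)%E.
Proof.
have M0 : 0 < M by lra.
have M1 : (0 <= (M + 1)%:E)%E by rewrite lee_fin; lra.
have dilation := FMiM_div_i_dilation _ M0.
split; [|split => //].
- apply: lt_le_trans (lee_wpmul2l M1 (FMiM_div_i_ge _ M0)).
  by rewrite -EFinM lte_fin minorant_integral_gt.
- rewrite -dilation; apply: le_lt_trans (lee_wpmul2l M1 (FMiM_div_i_le _ hM)) _.
  by rewrite -EFinM lte_fin majorant_bound_lt.
Qed.
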